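(* Let $\mathscr G=(\mathscr V,\mathscr E)$ be a finite connected graph with $N$ vertices, let $M\ge 0$ be an integer, and let $(X_t)_{t\in\mathbb N}$ be the uniform reshuffling model on $\mathscr G$ with $M$ coins, started from an arbitrary configuration. Then for every vertex $x\in\mathscr V$ and every $c\in\{0,1,\dots,M\}$, $$\lim_{t\to\infty}P(X_t(x)=c)=\binom{M-c+N-2}{N-2}\Big/\binom{M+N-1}{N-1}.$$ In particular, when $N$ and $T=M/N$ are large, $\lim_{t\to\infty}P(X_t(x)=c)\approx \frac1T e^{-c/T}$.
   Context: A configuration is a map $\xi:\mathscr V\to\mathbb N$ (number of coins at each vertex); $\mathscr C_{N,M}$ denotes the set of configurations with $\sum_{x}\xi(x)=M$. The uniform reshuffling model is the discrete-time Markov chain on $\mathscr C_{N,M}$ evolving as follows: at each time step $t$, an edge $(x,y)\in\mathscr E$ is chosen uniformly at random, $U$ is drawn uniformly from $\{0,1,\dots,X_t(x)+X_t(y)\}$ (independently of everything else), and one sets $X_{t+1}(x)=U$, $X_{t+1}(y)=X_t(x)+X_t(y)-U$, and $X_{t+1}(z)=X_t(z)$ for $z\notin\{x,y\}$. *)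

From mathcomp Require Import all_boot all_order all_algebra.
From mathcomp Require Import all_classical all_reals all_analysis.
Set Implicit Arguments. Unset Strict Implicit. Unset Printing Implicit Defensive.
Import Order.TTheory GRing.Theory Num.Theory.
Local Open Scope ring_scope.

(* Configurations with at most M coins per vertex (any configuration with
   M coins in total has this property); the constraint "sum = M" is imposed
   on the initial configuration and is preserved by the dynamics. *)
Definition cfg (V : finType) (M : nat) := {ffun V -> 'I_M.+1}.

Definition n_oriented_edges (V : finType) (e : rel V) : nat :=
  #|[set p : V * V | e p.1 p.2]|.

(* One-step transition probability of the uniform reshuffling model:
   an oriented edge (x,y) is chosen uniformly at random, then
   U uniform on {0,..,xi x + xi y}, new values x |-> U, y |-> xi x + xi y - U,
   all other vertices unchanged. *)
Definition step_prob (R : realType) (V : finType) (e : rel V) (M : nat)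
    (xi eta : cfg V M) : R :=
  (n_oriented_edges e)%:R^-1 *
  \sum_(p : V * V | e p.1 p.2)
     (if [forall z, ((z != p.1) && (z != p.2)) ==> (val (eta z) == val (xi z))]
         && (val (eta p.1) + val (eta p.2) == val (xi p.1) + val (xi p.2))%N
      then ((val (xi p.1) + val (xi p.2)).+1)%:R^-1 else 0).

Unset Implicit Arguments.
Fixpoint law (R : realType) (V : finType) (e : rel V) (M : nat)
    (xi0 : cfg V M) (t : nat) : cfg V M -> R :=
  match t with
  | 0 => fun eta => (eta == xi0)%:R
  | t'.+1 => fun eta => \sum_(xi : cfg V M) law R V e M xi0 t' xi * @step_prob R V e M xi eta
  end.

Set Implicit Arguments.
Definition prob_at (R : realType) (V : finType) (e : rel V) (M : nat)
    (xi0 : cfg V M) (t : nat) (x : V) (c : nat) : R :=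
  \sum_(eta : cfg V M | val (eta x) == c) law R V e M xi0 t eta.

From mathcomp Require Import all_boot all_order all_algebra.
From mathcomp Require Import all_classical all_reals all_analysis.
From mathcomp Require Import zify lra.
Import Order.TTheory GRing.Theory Num.Theory.
Import numFieldNormedType.Exports.
Local Open Scope ring_scope.
Set Implicit Arguments. Unset Strict Implicit.

(* The law of X_t is the t-th power of a transition kernel P which is symmetric:
   for each oriented edge, the reshuffle of (X(x), X(y)) is uniform over the
   splittings of X(x) + X(y), so P(a, b) = P(b, a), whether or not the graph
   itself is symmetric.  Hence P is doubly stochastic on the finite set S of
   configurations with M coins, and the uniform law on S is stationary.  Since
   P(a, a) > 0 and any configuration can move all coins to one vertex, one coin
   at a time along a path, some power P^K is bounded below by d > 0 on S.
   A Doeblin argument then contracts the distance to the uniform law by the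
   factor 1 - |S| d every K steps.  Finally P(X(x) = c) is the proportion of
   configurations with c coins at x, counted by stars and bars. *)

Section StarsAndBars.
Local Open Scope nat_scope.
Variables (V : finType) (M : nat).

Lemma sum_binomial_diag n m : \sum_(k < m.+1) 'C(k + n, n) = 'C(m + n.+1, n.+1).
Proof.
elim: m => [|m IHm]; first by rewrite big_ord1 !add0n !binn.
by rewrite big_ord_recr /= IHm [in RHS]addSn binS addSn -addnS addnC.
Qed.

Definition cfg_set (h : cfg V M) (a : V) (k : 'I_M.+1) : cfg V M :=
  [ffun v => if v == a then k else h v].

Definition redistributions (A : {set V}) (h : cfg V M) (m : nat) : {set cfg V M} :=
  [set f : cfg V M | [forall v in ~: A, f v == h v] & \sum_(v in A) val (f v) == m].

Lemma redistributions1 a h m : m <= M ->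
  redistributions [set a] h m = [set cfg_set h a (inord m)].
Proof.
move=> leMm; apply/setP => f; rewrite !inE big_set1.
apply/andP/eqP => [[/forallP fh /eqP fa] | ->].
  apply/ffunP => v; rewrite ffunE; case: eqVneq => [->|va].
    by apply: val_inj; rewrite -fa inord_val.
  by apply/eqP; have := fh v; rewrite !inE va.
split; last by rewrite ffunE eqxx /= inordK ?ltnS.
by apply/forall_inP => v; rewrite !inE ffunE => /negbTE ->.
Qed.

Lemma redistributions_fiber (A : {set V}) (h : cfg V M) m a (k : 'I_M.+1) :
  a \in A -> k <= m ->
  [set f in redistributions A h m | f a == k] =
  redistributions (A :\ a) (cfg_set h a k) (m - k).
Proof.
move=> Aa lekm; apply/setP => f; rewrite !inE (big_setD1 a Aa) /=.
apply/andP/andP => [[/andP [/forall_inP fh /eqP sumf] /eqP fa] | [/forall_inP fh /eqP sumf]].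
  split; last by rewrite -sumf fa addKn.
  apply/forall_inP => v; rewrite ffunE !inE negb_and negbK.
  by case: eqVneq => [->|_ /= vA]; [rewrite fa | apply: fh; rewrite inE].
have fa : f a = k by have := fh a; rewrite ffunE !inE eqxx => /(_ isT) /eqP.
split; last by rewrite fa.
apply/andP; split; last by rewrite fa sumf subnKC.
apply/forall_inP => v; rewrite inE => vA; have va : v != a by apply: contraNneq vA => ->.
by have := fh v; rewrite ffunE !inE (negbTE va) vA => /(_ isT).
Qed.

Lemma redistributions_le (A : {set V}) (h : cfg V M) m f a :
  f \in redistributions A h m -> a \in A -> val (f a) <= m.
Proof.
by rewrite inE => /andP [_ /eqP <-] Aa; rewrite (big_setD1 a Aa) leq_addr.
Qed.

Lemma card_redistributions n (A : {set V}) (h : cfg V M) m : #|A| = n.+1 -> m <= M ->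
  #|redistributions A h m| = 'C(m + n, n).
Proof.
elim: n A h m => [|n IHn] A h m cardA leMm.
  have /cards1P [a ->] : #|A| == 1 by rewrite cardA.
  by rewrite redistributions1 // cards1 addn0 bin0.
have [a Aa] : exists a, a \in A by apply/card_gt0P; rewrite cardA.
have cardAa : #|A :\ a| = n.+1 by move: cardA; rewrite (cardsD1 a) Aa => -[].
rewrite -sum1_card (partition_big (fun f : cfg V M => f a) predT) //=.
transitivity (\sum_(k < M.+1 | k < m.+1) 'C(m - k + n, n)).
  rewrite [RHS]big_mkcond /=; apply: eq_bigr => k _; rewrite sum1dep_card ltnS.
  case: leqP => [lekm | ltmk]; last first.
    apply: eq_card0 => f; rewrite inE; apply/negP.
    case/andP => /redistributions_le le_fm /eqP fa.
    by move: ltmk; rewrite -fa ltnNge le_fm.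
  rewrite redistributions_fiber // IHn //.
  exact: leq_trans (leq_subr _ _) leMm.
rewrite -(big_ord_widen M.+1 (fun k => 'C(m - k + n, n))) ?ltnS //.
rewrite -sum_binomial_diag (reindex_inj rev_ord_inj) /=.
by apply: eq_bigr => k _; rewrite subSS subKn // -ltnS.
Qed.

End StarsAndBars.

Lemma mix_dist_uniform_le (R : realType) (T : finType) (A : {pred T})
    (W mu : T -> R) (d C : R) :
  (0 < #|A|)%N -> (forall a, a \notin A -> W a = 0) -> (forall a, a \in A -> d <= W a) ->
  \sum_a W a = 1 -> \sum_(a in A) mu a = 1 ->
  (forall a, a \in A -> `|mu a - #|A|%:R^-1| <= C) ->
  `|\sum_a W a * mu a - #|A|%:R^-1| <= (1 - #|A|%:R * d) * C.
Proof.
move=> A_gt0 W0 leW sumW sum_mu le_mu; set u := #|A|%:R^-1.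
have sumWA : \sum_(a in A) W a = 1.
  by rewrite -sumW big_mkcond /=; apply: eq_bigr => a _; case: ifPn => // /W0 ->.
have sum_u : \sum_(a in A) u = 1.
  by rewrite sumr_const -mulr_natr mulVf // pnatr_eq0 -lt0n.
have sum_dev : \sum_(a in A) (mu a - u) = 0 by rewrite sumrB sum_mu sum_u subrr.
(* Lowering the weights by [d] is free because [mu - u] sums to [0] on [A]. *)
have -> : \sum_a W a * mu a - u = \sum_(a in A) (W a - d) * (mu a - u).
  transitivity (\sum_(a in A) W a * (mu a - u) - d * \sum_(a in A) (mu a - u)); last first.
    by rewrite mulr_sumr -sumrB; apply: eq_bigr => a _; rewrite mulrBl.
  rewrite sum_dev mulr0 subr0 (eq_bigr _ (fun a _ => mulrBr (W a) (mu a) u)).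
  rewrite sumrB -mulr_suml sumWA mul1r; congr (_ - _).
  rewrite [RHS]big_mkcond /=; apply: eq_bigr => a _.
  by case: ifPn => // /W0 ->; rewrite mul0r.
apply: le_trans (ler_norm_sum _ _ _) _.
rewrite (_ : (1 - #|A|%:R * d) * C = \sum_(a in A) (W a - d) * C); last first.
  by rewrite -mulr_suml sumrB sumWA sumr_const mulr_natl.
apply: ler_sum => a Aa; rewrite normrM ger0_norm ?subr_ge0 ?leW //.
by rewrite ler_wpM2l ?subr_ge0 ?leW ?le_mu.
Qed.

Section SymmetricKernel.
Variables (R : realType) (T : finType) (P : T -> T -> R) (S : {pred T}).
Local Open Scope classical_set_scope.

Fixpoint kernel_pow t a b : R :=
  if t is t'.+1 then \sum_z kernel_pow t' a z * P z b else (b == a)%:R.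

Hypothesis P_ge0 : forall a b, 0 <= P a b.
Hypothesis P_sym : forall a b, P a b = P b a.
Hypothesis P_closed : forall a b, a \in S -> b \notin S -> P a b = 0.
Hypothesis P_stochastic : forall a, a \in S -> \sum_b P a b = 1.

Lemma kernel_pow_ge0 t a b : 0 <= kernel_pow t a b.
Proof.
elim: t b => [|t IHt] b /=; first exact: ler0n.
by apply: sumr_ge0 => z _; rewrite mulr_ge0.
Qed.

Lemma kernel_powD s t a b :
  kernel_pow (s + t) a b = \sum_z kernel_pow s a z * kernel_pow t z b.
Proof.
elim: t b => [|t IHt] b.
  rewrite addn0 (bigD1 b) //= eqxx mulr1 big1 ?addr0 // => z zb.
  by rewrite eq_sym (negbTE zb) mulr0.
rewrite addnS /=; under eq_bigr => y _ do rewrite IHt mulr_suml.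
rewrite exchange_big /=; apply: eq_bigr => z _.
by rewrite mulr_sumr; apply: eq_bigr => y _; rewrite mulrA.
Qed.

Lemma kernel_pow1 a b : kernel_pow 1 a b = P a b.
Proof.
rewrite /= (bigD1 a) //= eqxx mul1r big1 ?addr0 // => z za.
by rewrite (negbTE za) mul0r.
Qed.

Lemma kernel_pow_sym t a b : kernel_pow t a b = kernel_pow t b a.
Proof.
elim: t a b => [|t IHt] a b; first by rewrite /= eq_sym.
rewrite -add1n kernel_powD; apply: eq_bigr => z _.
by rewrite kernel_pow1 IHt P_sym mulrC.
Qed.

Lemma kernel_pow_closed t a b : a \in S -> b \notin S -> kernel_pow t a b = 0.
Proof.
move=> Sa; elim: t b => [|t IHt] b Sb /=.
  by case: eqVneq Sb => // ->; rewrite Sa.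
apply: big1 => z _; have [Sz|Sz] := boolP (z \in S).
  by rewrite P_closed ?mulr0.
by rewrite IHt ?mul0r.
Qed.

Lemma kernel_pow_stochastic t a : a \in S -> \sum_b kernel_pow t a b = 1.
Proof.
move=> Sa; elim: t => [|t IHt].
  by rewrite /= (bigD1 a) //= eqxx big1 ?addr0 // => b /negbTE ->.
rewrite /= exchange_big /= -IHt; apply: eq_bigr => z _.
rewrite -mulr_sumr; have [Sz|Sz] := boolP (z \in S).
  by rewrite P_stochastic // mulr1.
by rewrite kernel_pow_closed // mul0r.
Qed.

Lemma kernel_pow_stochastic_in t a : a \in S -> \sum_(b in S) kernel_pow t a b = 1.
Proof.
move=> Sa; rewrite -(kernel_pow_stochastic t Sa) [RHS](bigID (mem S)) /=.
by rewrite [X in _ + X]big1 ?addr0 // => b /kernel_pow_closed ->.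
Qed.

Definition reachable a b := exists t, 0 < kernel_pow t a b.

Lemma reachable_refl a : reachable a a.
Proof. by exists 0%N; rewrite /= eqxx ltr01. Qed.

Lemma reachable_step a b : 0 < P a b -> reachable a b.
Proof. by exists 1%N; rewrite kernel_pow1. Qed.

Lemma reachable_trans a b c : reachable a b -> reachable b c -> reachable a c.
Proof.
move=> [s kab] [t kbc]; exists (s + t)%N; rewrite kernel_powD (bigD1 b) //=.
rewrite ltr_wpDr ?mulr_gt0 //.
by apply: sumr_ge0 => z _; rewrite mulr_ge0 ?kernel_pow_ge0.
Qed.

Lemma reachable_sym a b : reachable a b -> reachable b a.
Proof. by move=> [t kab]; exists t; rewrite kernel_pow_sym. Qed.

Lemma reachable_closed a b : a \in S -> reachable a b -> b \in S.
Proof.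
move=> Sa [t kab]; apply: contraTT kab => Sb.
by rewrite kernel_pow_closed // ltxx.
Qed.

Lemma sum_kernel_pow_in t a (Q : {pred T}) : a \in S ->
  \sum_(b | Q b) kernel_pow t a b = \sum_(b in [predI S & Q]) kernel_pow t a b.
Proof.
move=> Sa; rewrite big_mkcond [RHS]big_mkcond /=; apply: eq_bigr => b _.
by rewrite inE; have [Sb|Sb] := boolP (b \in S) => /=; last by rewrite kernel_pow_closed ?if_same.
Qed.

Hypothesis P_diag_gt0 : forall a, a \in S -> 0 < P a a.
Hypothesis S_connected : forall a b, a \in S -> b \in S -> reachable a b.

Lemma kernel_pow_eventually_gt0 a b : a \in S -> b \in S ->
  \forall t \near \oo, 0 < kernel_pow t a b.
Proof.
move=> Sa Sb; have [t0 kt0] := S_connected Sa Sb.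
exists t0 => // t /=; elim: t => [|t IHt]; first by rewrite leqn0 => /eqP <-.
rewrite leq_eqVlt ltnS => /predU1P [<- // | /IHt kt].
rewrite /= (bigD1 b) //= ltr_wpDr ?mulr_gt0 ?P_diag_gt0 //.
by apply: sumr_ge0 => z _; rewrite mulr_ge0 ?kernel_pow_ge0.
Qed.

Lemma kernel_pow_doeblin : exists K, exists2 d, 0 < d &
  forall a b, a \in S -> b \in S -> d <= kernel_pow K.+1 a b.
Proof.
pose inS2 (ab : T * T) := (ab.1 \in S) && (ab.2 \in S).
have : \forall t \near \oo, forall ab, inS2 ab -> 0 < kernel_pow t ab.1 ab.2.
  apply: filter_forall => -[a b]; have [/andP [Sa Sb]|nSab] := boolP (inS2 (a, b)).
    by apply: filterS (kernel_pow_eventually_gt0 Sa Sb).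
  by apply: nearW.
case=> K _ HK; exists K.
exists (\big[Num.min/1]_(ab | inS2 ab) kernel_pow K.+1 ab.1 ab.2).
  by apply/bigmin_gtP; split => // ab; apply: HK; rewrite /= leqnSn.
by move=> a b Sa Sb; apply: (bigmin_le_cond _ (j := (a, b))); rewrite /inS2 Sa Sb.
Qed.

Local Notation unif := (#|S|%:R^-1 : R).

Lemma kernel_pow_contract a0 s d C t : a0 \in S ->
  (forall a b, a \in S -> b \in S -> d <= kernel_pow s a b) ->
  (forall b, b \in S -> `|kernel_pow t a0 b - unif| <= C) ->
  forall b, b \in S -> `|kernel_pow (t + s) a0 b - unif| <= (1 - #|S|%:R * d) * C.
Proof.
move=> Sa0 led leC b Sb; rewrite kernel_powD.
under eq_bigr => z _ do rewrite (kernel_pow_sym s) mulrC.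
apply: mix_dist_uniform_le => //.
- by apply/card_gt0P; exists b.
- by move=> z Sz; rewrite kernel_pow_closed.
- by move=> z Sz; apply: led.
- exact: kernel_pow_stochastic.
- exact: kernel_pow_stochastic_in.
Qed.

Lemma kernel_pow_dist_uniform_geometric a0 : a0 \in S ->
  exists K, exists2 rho, 0 <= rho < 1 &
  forall t b, b \in S -> `|kernel_pow t a0 b - unif| <= rho ^+ (t %/ K.+1).
Proof.
move=> Sa0; have [K [d d_gt0 led]] := kernel_pow_doeblin.
have S_gt0 : (0 < #|S|)%N by apply/card_gt0P; exists a0.
pose dist_le t C := forall b, b \in S -> `|kernel_pow t a0 b - unif| <= C.
have dist_le0 : dist_le 0%N 1.
  have u_ge0 : 0 <= unif by rewrite invr_ge0 ler0n.
  have u_le1 : unif <= 1 by rewrite invf_le1 ?ltr0n // ler1n.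
  by move=> b _; rewrite /= ler_norml; case: (b == a0); rewrite ?(mulr1n, mulr0n); lra.
have dist_leS t C : dist_le t C -> dist_le t.+1 C.
  move=> leC; have := kernel_pow_contract Sa0 (fun a z _ _ => kernel_pow_ge0 1 a z) leC.
  by rewrite mulr0 subr0 mul1r addn1.
set rho := 1 - #|S|%:R * d.
have dist_leK t C : dist_le t C -> dist_le (t + K.+1)%N (rho * C).
  by move=> leC; apply: kernel_pow_contract.
exists K, rho.
  rewrite subr_ge0 ltrBlDr ltrDl mulr_gt0 ?ltr0n ?andbT //.
  rewrite -[X in _ <= X](kernel_pow_stochastic_in K.+1 Sa0) mulr_natl -sumr_const.
  by apply: ler_sum => b Sb; apply: led.
have dist_le_blocks q r : dist_le (q * K.+1 + r)%N (rho ^+ q).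
  elim: q => [|q IHq]; first by rewrite mul0n add0n expr0; elim: r => // r; apply: dist_leS.
  by rewrite mulSnr -addnA [(K.+1 + r)%N]addnC addnA exprS; apply: dist_leK.
by move=> t; rewrite {1}(divn_eq t K.+1); apply: dist_le_blocks.
Qed.

Lemma kernel_pow_cvg_uniform a0 b : a0 \in S -> b \in S ->
  (fun t => kernel_pow t a0 b) @ \oo --> unif.
Proof.
move=> Sa0 Sb.
have [K [rho /andP [rho_ge0 rho_lt1] le_rho]] := kernel_pow_dist_uniform_geometric Sa0.
have blocks_cvg : (fun t => (t %/ K.+1)%N) @ \oo --> \oo.
  by apply/cvgnyPge => n; apply: filterS (nbhs_infty_ge (n * K.+1)) => t; rewrite leq_divRL.
have rho_norm_lt1 : `|rho| < 1 by rewrite ger0_norm.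
have /cvgr0Pnorm_le rho_cvg0 := cvg_comp _ _ blocks_cvg (cvg_expr rho_norm_lt1).
apply/cvgrPdist_le => eps eps_gt0; apply: filterS (rho_cvg0 _ eps_gt0) => t /=.
rewrite distrC normrX ger0_norm //; exact: le_trans (le_rho _ _ Sb).
Qed.

Theorem sum_kernel_pow_cvg a0 (Q : {pred T}) : a0 \in S ->
  (fun t => \sum_(b | Q b) kernel_pow t a0 b) @ \oo -->
    (#|[predI S & Q]|%:R / #|S|%:R : R).
Proof.
move=> Sa0; under eq_cvg do rewrite sum_kernel_pow_in //.
rewrite mulr_natl -sumr_const; apply: cvg_big => // [|b /andP [Sb _]].
  exact: add_continuous.
exact: kernel_pow_cvg_uniform.
Qed.

End SymmetricKernel.

Section UniformReshuffling.
Variables (R : realType) (V : finType) (e : rel V) (M : nat).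
Hypothesis e_irr : irreflexive e.
Hypothesis e_conn : forall x y : V, connect e x y.
Hypothesis V_gt1 : (1 < #|V|)%N.

Local Notation P := (@step_prob R V e M).

Definition coins (a : cfg V M) : nat := \sum_v val (a v).

Definition full_cfg : {pred cfg V M} := [pred a | coins a == M].

Definition reshuffle (a b : cfg V M) (p : V * V) : bool :=
  [forall z, ((z != p.1) && (z != p.2)) ==> (val (b z) == val (a z))]
  && (val (b p.1) + val (b p.2) == val (a p.1) + val (a p.2))%N.

Lemma step_probE a b : P a b =
  (n_oriented_edges e)%:R^-1 * \sum_(p : V * V | e p.1 p.2)
     (if reshuffle a b p then (val (a p.1) + val (a p.2))%N.+1%:R^-1 else 0).
Proof. by []. Qed.

Lemma edge_neq u v : e u v -> u != v.
Proof. by apply: contraTneq => ->; rewrite e_irr. Qed.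

Lemma exists_edge : exists u v, e u v.
Proof.
have [x [y [_ _ xy]]] := card_gt1P V_gt1.
have [[|v p] /= pth] := connectP (e_conn x y); first by move=> yx; rewrite yx eqxx in xy.
by case/andP: pth => exv _ _; exists x, v.
Qed.

Lemma n_oriented_edges_gt0 : (0 < n_oriented_edges e)%N.
Proof. by have [u [v euv]] := exists_edge; apply/card_gt0P; exists (u, v); rewrite inE. Qed.

Lemma coins_split (a : cfg V M) u v : u != v ->
  coins a = (val (a u) + val (a v) + \sum_(z | (z != u) && (z != v)) val (a z))%N.
Proof.
move=> uv; rewrite /coins (bigD1 u) //= (bigD1 v) /=; last by rewrite eq_sym.
by rewrite addnA.
Qed.

Lemma full_cfg_pair_le a u v : a \in full_cfg -> u != v ->
  (val (a u) + val (a v) <= M)%N.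
Proof. by move=> /eqP aM uv; rewrite -[X in (_ <= X)%N]aM (coins_split a uv) leq_addr. Qed.

Lemma reshuffle_sym a b p : reshuffle a b p = reshuffle b a p.
Proof.
rewrite /reshuffle [(_ + _ == _)%N]eq_sym; congr (_ && _).
by apply: eq_forallb => z; rewrite [val (b z) == _]eq_sym.
Qed.

Lemma coins_reshuffle a b p : e p.1 p.2 -> reshuffle a b p -> coins b = coins a.
Proof.
move=> /edge_neq p12 /andP [/forallP ab /eqP ab12].
rewrite (coins_split a p12) (coins_split b p12) ab12; congr (_ + _)%N.
by apply: eq_bigr => z z12; apply/eqP; exact: implyP (ab z) z12.
Qed.

Lemma step_prob_ge0 a b : 0 <= P a b.
Proof.
rewrite step_probE mulr_ge0 ?invr_ge0 ?ler0n //; apply: sumr_ge0 => p _.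
by case: ifP; rewrite ?invr_ge0 ?ler0n.
Qed.

Lemma step_prob_sym a b : P a b = P b a.
Proof.
rewrite !step_probE; congr (_ * _); apply: eq_bigr => p _.
by rewrite reshuffle_sym; case: ifP => // /andP [_ /eqP ->].
Qed.

Lemma step_prob_closed a b : a \in full_cfg -> b \notin full_cfg -> P a b = 0.
Proof.
move=> /eqP fa /negP fb; rewrite step_probE big1 ?mulr0 // => p ep.
by case: ifP => // /(coins_reshuffle ep) ba; case: fb; rewrite inE ba fa.
Qed.

Lemma card_reshuffle a p : a \in full_cfg -> e p.1 p.2 ->
  #|[pred b | reshuffle a b p]| = (val (a p.1) + val (a p.2))%N.+1.
Proof.
move=> fa /edge_neq p12; set s := (val (a p.1) + val (a p.2))%N.
have le_sM : (s <= M)%N by apply: full_cfg_pair_le.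
have val_inord (k : nat) : (k <= s)%N -> val (inord k : 'I_M.+1) = k.
  by move=> leks; rewrite /= inordK // ltnS (leq_trans leks).
pose split_at (k : 'I_s.+1) : cfg V M :=
  [ffun z => if z == p.1 then inord k else if z == p.2 then inord (s - k) else a z].
have split_at1 k : val (split_at k p.1) = k.
  by rewrite ffunE eqxx val_inord // -ltnS.
have split_at2 k : val (split_at k p.2) = (s - k)%N.
  by rewrite ffunE eq_sym (negbTE p12) eqxx val_inord ?leq_subr.
have split_at_inj : injective split_at.
  move=> k1 k2 /(congr1 (fun b : cfg V M => val (b p.1))).
  by rewrite /= !split_at1 => /val_inj.
rewrite -[in RHS](card_ord s.+1) -(card_imset _ split_at_inj).
apply: eq_card => b; rewrite !inE; apply/idP/imsetP.
  case/andP => /forallP ab /eqP ab12.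
  have lt_b1s : (val (b p.1) < s.+1)%N by rewrite ltnS /s -ab12 leq_addr.
  have b2 : val (b p.2) = (s - val (b p.1))%N by rewrite /s -ab12 addKn.
  exists (Ordinal lt_b1s) => //; apply/ffunP => z; apply: val_inj; rewrite ffunE.
  case: eqVneq => [->|z1]; first by rewrite val_inord // -ltnS.
  case: eqVneq => [->|z2]; first by rewrite val_inord ?leq_subr.
  by apply/eqP; have := ab z; rewrite z1 z2.
case=> k _ ->; apply/andP; split.
  by apply/forallP => z; apply/implyP => /andP [z1 z2]; rewrite ffunE (negbTE z1) (negbTE z2).
by rewrite split_at1 split_at2 subnKC // -ltnS.
Qed.

Lemma step_prob_stochastic a : a \in full_cfg -> \sum_b P a b = 1.
Proof.
move=> fa; under eq_bigr do rewrite step_probE.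
rewrite -mulr_sumr exchange_big /= (eq_bigr (fun=> 1)) => [|p ep].
  rewrite sumr_const; have -> : #|(fun p : V * V => e p.1 p.2)| = n_oriented_edges e.
    by rewrite /n_oriented_edges cardsE.
  by rewrite mulVf // pnatr_eq0 -lt0n n_oriented_edges_gt0.
rewrite -(big_mkcond (fun b => reshuffle a b p)) /= sumr_const card_reshuffle //.
by rewrite -(mulr_natr _^-1) mulVf // pnatr_eq0.
Qed.

Lemma step_prob_gt0 a b u v : e u v -> reshuffle a b (u, v) -> 0 < P a b.
Proof.
move=> euv abuv; rewrite step_probE mulr_gt0 //.
  rewrite invr_gt0 ltr0n; apply/card_gt0P; exists (u, v); by rewrite inE.
rewrite (bigD1 (u, v)) //= abuv ltr_wpDr ?invr_gt0 ?ltr0n //.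
by apply: sumr_ge0 => p _; case: ifP; rewrite ?invr_ge0 ?ler0n.
Qed.

Lemma step_prob_diag_gt0 a : 0 < P a a.
Proof.
have [u [v euv]] := exists_edge; apply: (step_prob_gt0 euv).
by rewrite /reshuffle eqxx andbT; apply/forallP => z; rewrite eqxx implybT.
Qed.

Local Notation reach := (reachable P).

Definition move_coin (a : cfg V M) (u w : V) : cfg V M :=
  [ffun z => inord (val (a z) - (z == u) + (z == w))].

Lemma val_move_coin a u w z : a \in full_cfg -> (0 < val (a u))%N ->
  val (move_coin a u w z) = (val (a z) - (z == u) + (z == w))%N.
Proof.
move=> fa au; rewrite ffunE /= inordK // ltnS.
have le_aM y : (val (a y) <= M)%N by rewrite -ltnS ltn_ord.
have [->|zw] /= := eqVneq z w; last by rewrite addn0 (leq_trans (leq_subr _ _)) ?le_aM.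
have [->|wu] /= := eqVneq w u; first by rewrite subnK ?le_aM.
rewrite subn0 addn1; apply: leq_trans (full_cfg_pair_le fa wu).
by rewrite -addn1 leq_add2l.
Qed.

Lemma move_coin_id a u : a \in full_cfg -> (0 < val (a u))%N -> move_coin a u u = a.
Proof.
move=> fa au; apply/ffunP => z; apply: val_inj; rewrite val_move_coin //.
by have [->|_] := eqVneq z u; rewrite ?subnK ?subn0 ?addn0.
Qed.

Lemma reshuffle_move_coin a u v : a \in full_cfg -> (0 < val (a u))%N -> u != v ->
  reshuffle a (move_coin a u v) (u, v).
Proof.
move=> fa au uv; apply/andP; split.
  apply/forallP => z; apply/implyP => /andP [zu zv].
  by rewrite val_move_coin // (negbTE zu) (negbTE zv) subn0 addn0.
rewrite /= !val_move_coin // !eqxx; case: eqVneq uv => // _ _ /=.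
by rewrite subn0 addn0 addnCA subnK // addnC.
Qed.

Lemma reachable_move_coin_path a u p : path e u p -> a \in full_cfg ->
  (0 < val (a u))%N -> reach a (move_coin a u (last u p)).
Proof.
elim: p u a => [|v p IHp] u a /=.
  by move=> _ fa au; rewrite move_coin_id //; exact: reachable_refl.
case/andP => euv pv fa au.
have step_uv := step_prob_gt0 euv (reshuffle_move_coin fa au (edge_neq euv)).
have fb := reachable_closed step_prob_closed fa (reachable_step step_uv).
have bv : (0 < val (move_coin a u v v))%N by rewrite val_move_coin // eqxx addn1.
apply: (reachable_trans step_prob_ge0 (reachable_step step_uv)).
suff <- : move_coin (move_coin a u v) v (last v p) = move_coin a u (last v p) by exact: IHp.
apply/ffunP => z; apply: val_inj; rewrite !val_move_coin ?addnK //.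
by rewrite eqxx addn1.
Qed.

Definition pile (r : V) : cfg V M := [ffun z => if z == r then ord_max else ord0].

Lemma full_cfg_pile a r : a \in full_cfg -> val (a r) = M -> a = pile r.
Proof.
move=> fa arM; apply/ffunP => z; apply: val_inj; rewrite ffunE.
have [->|zr] := eqVneq z r; first exact: arM.
by have := full_cfg_pair_le fa zr; rewrite arM addnC -leq_subRL // subnn leqn0 => /eqP ->.
Qed.

Lemma reachable_pile a r : a \in full_cfg -> reach a (pile r).
Proof.
move=> fa; move: {2}(M - val (a r))%N (leqnn (M - val (a r))) => k.
elim: k a fa => [|k IHk] a fa le_ar.
  have arM : val (a r) = M by apply/eqP; rewrite eqn_leq -ltnS ltn_ord /= -subn_eq0 -leqn0.
  by rewrite (full_cfg_pile fa arM); exact: reachable_refl.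
have [le_ark|lt_ar] := leqP (M - val (a r)) k; first exact: IHk.
have [u /andP [ur au]] : exists u, (u != r) && (0 < val (a u))%N.
  apply/existsP; apply: contraLR lt_ar => /existsPn a0; rewrite -leqNgt.
  rewrite -{1}(eqP fa) /coins (bigD1 r) //= big1 ?addn0 ?subnn // => z zr.
  by have := a0 z; rewrite zr /= lt0n negbK => /eqP.
have [p pth r_last] := connectP (e_conn u r).
have ab := reachable_move_coin_path pth fa au; rewrite -r_last in ab.
apply: (reachable_trans step_prob_ge0 ab).
apply: IHk (reachable_closed step_prob_closed fa ab) _.
by rewrite val_move_coin // eq_sym (negbTE ur) eqxx subn0 addn1 subnS; move: le_ar lt_ar; lia.
Qed.

Lemma full_cfg_connected a b : a \in full_cfg -> b \in full_cfg -> reach a b.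
Proof.
move=> fa fb; have [r _] := exists_edge.
apply: (reachable_trans step_prob_ge0 (reachable_pile r fa)).
exact: (reachable_sym step_prob_sym (reachable_pile r fb)).
Qed.

Lemma law_kernel_pow xi0 t eta : law R V e M xi0 t eta = kernel_pow P t xi0 eta.
Proof. by elim: t eta => [|t IHt] eta //=; apply: eq_bigr => xi _; rewrite IHt. Qed.

Lemma card_full_cfg n : #|V| = n.+1 -> #|full_cfg| = 'C(M + n, n).
Proof.
move=> cardV.
rewrite -(card_redistributions (A := [set: V]) ([ffun=> ord0] : cfg V M) (m := M)) ?cardsT //.
apply: eq_card => a; rewrite !inE /coins.
have -> : (\sum_(v in [set: V]) val (a v) = \sum_v val (a v))%N.
  by apply: eq_bigl => v; rewrite inE.
by rewrite [X in X && _](_ : _ = true) //; apply/forall_inP => v; rewrite !inE.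
Qed.

Lemma card_full_cfg_at (x : V) c n : #|V| = n.+2 -> (c <= M)%N ->
  #|[predI full_cfg & [pred a : cfg V M | val (a x) == c]]| = 'C(M - c + n, n).
Proof.
move=> cardV leMc.
rewrite -(card_redistributions (A := [set~ x]) ([ffun=> inord c] : cfg V M) (m := M - c))
  ?leq_subr ?cardsC1 ?cardV //.
apply: eq_card => a; rewrite !inE finset.setCK /coins (bigD1 x) //=.
have -> : (\sum_(v | v != x) val (a v) = \sum_(v in [set~ x]) val (a v))%N.
  by apply: eq_bigl => v; rewrite !inE.
apply/andP/andP => [[/eqP sum_a /eqP ax] | [/forall_inP ax /eqP sum_a]].
  split; last by apply/eqP; rewrite -[in RHS]sum_a ax addKn.
  by apply/forall_inP => v /set1P ->; rewrite ffunE; apply/eqP/val_inj; rewrite /= ax inordK.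
have {}ax : val (a x) = c.
  by have := ax x (set11 x); rewrite ffunE => /eqP ->; rewrite /= inordK.
by rewrite ax sum_a subnKC.
Qed.

Local Open Scope classical_set_scope.

Theorem law_sum_cvg xi0 (Q : {pred cfg V M}) : xi0 \in full_cfg ->
  (fun t => \sum_(eta | Q eta) law R V e M xi0 t eta) @ \oo -->
    (#|[predI full_cfg & Q]|%:R / #|full_cfg|%:R : R).
Proof.
move=> full_xi0; under eq_cvg do under eq_bigr do rewrite law_kernel_pow.
apply: sum_kernel_pow_cvg full_xi0.
- exact: step_prob_ge0.
- exact: step_prob_sym.
- exact: step_prob_closed.
- exact: step_prob_stochastic.
- by move=> a _; apply: step_prob_diag_gt0.
- exact: full_cfg_connected.
Qed.

End UniformReshuffling.

Arguments full_cfg {V M}.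

Local Open Scope classical_set_scope.

Theorem theorem1 (R : realType) (V : finType) (e : rel V) (N M : nat)
  (e_sym : symmetric e) (e_irr : irreflexive e)
  (e_conn : forall x y : V, connect e x y)
  (HN : #|V| = N) (HN2 : (2 <= N)%N)
  (xi0 : cfg V M) (Hxi0 : (\sum_(v : V) val (xi0 v))%N = M)
  (x : V) (c : nat) (Hc : (c <= M)%N) :
  (fun t => prob_at R e xi0 t x c) @ \oo -->
    (('C(M - c + N - 2, N - 2))%:R / ('C(M + N - 1, N - 1))%:R : R).
Proof.
have [n Nn] : exists n, N = n.+2 by exists (N - 2)%N; lia.
have V_gt1 : (1 < #|V|)%N by rewrite HN Nn.
have full_xi0 : xi0 \in full_cfg by rewrite inE /coins Hxi0.
have -> : 'C(M - c + N - 2, N - 2) = #|[predI full_cfg & [pred a : cfg V M | val (a x) == c]]|.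
  by rewrite (card_full_cfg_at x (n := n)) ?HN ?Nn // !addnS !subSS !subn0.
have -> : 'C(M + N - 1, N - 1) = #|@full_cfg V M|.
  by rewrite (card_full_cfg M (n := n.+1)) ?HN ?Nn // !addnS !subSS !subn0.
exact: law_sum_cvg.
Qed.
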